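(* Let $q$ be a prime power, $Q\in\mathbb{P}^2(\mathbb{F}_q)$, and $L_1,\dots,L_{q+1}$ the $\mathbb{F}_q$-lines through $Q$. Then for all sufficiently large $d$, \[ \mu_d(\mathcal{A}_0(Q))\le\frac{1}{1-q^{-2}}\prod_{i=1}^{q+1}\mu_d\big(R_{\mathrm{homog}}\setminus\mathcal{T}_{L_i,Q}\big), \] and for each $1\le j\le q+1$, \[ \mu_d(\mathcal{A}_{L_j}(Q))\le\mu_d(\mathcal{T}_{L_j,Q})\prod_{i\ne j}\mu_d\big(R_{\mathrm{homog}}\setminus\mathcal{T}_{L_i,Q}\big). \] Consequently, both inequalities also hold with $\mu_d$ replaced by $\mu$.
   Context: Let $R=\mathbb{F}_q[x,y,z]$, $R_d$ the homogeneous polynomials of degree $d$ (including $0$), $R_{\mathrm{homog}}=\bigcup_{d\ge1}R_d$, $\mu_d(\mathcal{A})=\#(\mathcal{A}\cap R_d)/\#R_d$, $\mu(\mathcal{A})=\lim_d\mu_d(\mathcal{A})$. $\mathcal{S}_Q$ is the set of $f\in R_{\mathrm{homog}}$ with $\{f=0\}$ singular at $Q$. For an $\mathbb{F}_q$-line $L\ni Q$, $\mathcal{T}_{L,Q}$ is the set of $f\in R_{\mathrm{homog}}$ whose restriction to $L$ vanishes to order at least $2$ at $Q$ (''$\{f=0\}$ tangent to $L$ at $Q$'', including the singular case). Define $\mathcal{A}_0(Q)=R_{\mathrm{homog}}\setminus\bigcup_{i=1}^{q+1}\mathcal{T}_{L_i,Q}$ and, for an $\mathbb{F}_q$-line $L\ni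 Q$, $\mathcal{A}_L(Q)=\mathcal{T}_{L,Q}\setminus\mathcal{S}_Q$. *)

From HB Require Import structures.
From mathcomp Require Import all_boot all_order all_algebra.
From mathcomp Require Import all_classical all_reals all_analysis.
Set Implicit Arguments. Unset Strict Implicit. Unset Printing Implicit Defensive.
Import Order.TTheory GRing.Theory Num.Theory.
Local Open Scope ring_scope.

(* Monomials x^a y^b z^c of degree d, encoded by (a,b) with a + b <= d,
   c = d - a - b. *)
Definition mon (d : nat) := {t : 'I_d.+1 * 'I_d.+1 | (t.1 + t.2 <= d)%N}.

Definition mexp (d : nat) (k : nat) (t : mon d) : nat :=
  let a := nat_of_ord (val t).1 in let b := nat_of_ord (val t).2 in
  if k == 0%N then a else if k == 1%N then b else (d - a - b)%N.

(* R_d : homogeneous polynomials of degree d (0 included) in F[x,y,z],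
   represented by their coefficient vectors. *)
Definition homog (F : finFieldType) (d : nat) := {ffun mon d -> F}.

Definition coord (F : fieldType) (v : 'rV[F]_3) (k : nat) : F := v ord0 (inord k).

Definition evalh (F : finFieldType) d (f : homog F d) (S : comNzRingType)
  (c : F -> S) (X : nat -> S) : S :=
  \sum_(t : mon d) c (f t) * \prod_(k < 3) X k ^+ mexp k t.

Definition valh (F : finFieldType) d (f : homog F d) (Q : 'rV[F]_3) : F :=
  evalh f id (coord Q).

Definition pderh (F : finFieldType) d (f : homog F d) (i : nat) (Q : 'rV[F]_3) : F :=
  \sum_(t : mon d) f t * (mexp i t)%:R *
     \prod_(k < 3) coord Q k ^+ (mexp k t - (k == i :> nat))%N.

Definition singularb (F : finFieldType) d (f : homog F d) (Q : 'rV[F]_3) : bool :=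
  (valh f Q == 0) && [forall i : 'I_3, pderh f i Q == 0].

(* the line {x : l . x = 0} given by a nonzero linear form l *)
Definition on_line (F : fieldType) (l P : 'rV[F]_3) : bool :=
  \sum_(k < 3) coord l k * coord P k == 0.

(* restriction of f to the line through Q and P, parametrized by
   t |-> Q + t P (affine chart of the line containing Q at t = 0) *)
Definition restr (F : finFieldType) d (f : homog F d) (Q P : 'rV[F]_3) : {poly F} :=
  evalh f (fun a => a%:P) (fun k => (coord Q k)%:P + (coord P k)%:P * 'X).

(* T_{L,Q}: the restriction of f to L vanishes to order >= 2 at Q *)
Definition tangentb (F : finFieldType) d (f : homog F d) (Q l : 'rV[F]_3) : bool :=
  [forall P : 'rV[F]_3, on_line l P ==> ~~ (P <= Q)%MS ==> dvdp ('X ^+ 2) (restr f Q P)].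

Definition mud (R : realType) (F : finFieldType) d (A : pred (homog F d)) : R :=
  (#|[set f : homog F d | A f]|%:R) / (#|{: homog F d}|%:R).

Definition A0b (F : finFieldType) d (Q : 'rV[F]_3) (Ls : seq 'rV[F]_3) (f : homog F d) : bool :=
  all (fun l => ~~ tangentb f Q l) Ls.

Definition ALb (F : finFieldType) d (Q l : 'rV[F]_3) (f : homog F d) : bool :=
  tangentb f Q l && ~~ singularb f Q.

Definition lines_through (F : finFieldType) (Q : 'rV[F]_3) (Ls : seq 'rV[F]_3) : Prop :=
  (forall l, l \in Ls -> l != 0 /\ on_line l Q) /\
  (forall l', l' != 0 -> on_line l' Q -> count (fun l => (l' == l)%MS) Ls = 1%N).

(* Fix Q <> 0 and d >= 1.  The jet f |-> (f(Q), grad f(Q)) of a form of degree d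
   is additive and, by Euler's identity, maps R_d onto the hyperplane
   H = {(v, g) | g.Q = d v} of F^4, so mu_d of a set defined through the jet is the
   proportion of H it occupies.  Restricted to a line l through Q, f vanishes to
   order 2 at Q iff f(Q) = 0 and grad f(Q) is in F l; f is singular at Q iff its
   jet is 0; and since every nonzero g with g.Q = 0 defines one of the q + 1 lines
   through Q, A_0(Q) is {f(Q) <> 0}.  Counting in H gives mu_d(T_L) = q^-2,
   mu_d(A_L) = q^-2 (1 - q^-1) and mu_d(A_0) = 1 - q^-1 for every d >= 1, so the
   limits are the same constants, and both inequalities reduce to Bernoulli's
   1 - q^-1 <= (1 - q^-2)^q. *)

From Pilot Require Import Defs.
From HB Require Import structures.
From mathcomp Require Import all_boot all_order all_algebra.
From mathcomp Require Import all_classical all_reals all_analysis.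
From mathcomp Require Import ring lra zify.
Import Order.TTheory GRing.Theory Num.Theory.
Import numFieldNormedType.Exports.
Local Open Scope ring_scope.
Set Implicit Arguments. Unset Strict Implicit.

(* [vector] exports another [coord]. *)
Local Notation coord := Defs.coord.

(* Declares the finite Z-module structures of [homog F d] and [F * 'rV[F]_3]. *)
HB.saturate finfun_of.
HB.saturate prod.

(** * Fibers of additive maps *)

Section MorphismFibers.
Variables (V W : finZmodType) (phi : V -> W).
Hypothesis phiD : {morph phi : x y / x + y}.

Lemma morph0 : phi 0 = 0.
Proof. by apply: (addIr (phi 0)); rewrite -phiD !add0r. Qed.

Lemma card_fiber x : #|[set y | phi y == phi x]| = #|[set y | phi y == 0]|.
Proof.
rewrite -(card_preimset _ (addIr x)); apply: eq_card => y.
by rewrite !inE phiD -{2}[phi x]add0r (inj_eq (addIr _)).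
Qed.

Lemma card_preim_morph (P : pred W) :
  #|[set x | P (phi x)]| =
  (#|[set w in codom phi | P w]| * #|[set x | phi x == 0%R]|)%N.
Proof.
rewrite -sum1_card (partition_big phi (fun w => (w \in codom phi) && P w)); last first.
  by move=> x; rewrite inE => Px; rewrite codom_f.
rewrite -sum_nat_cond_const; apply: eq_bigr => w /andP[/codomP[x ->] Px].
rewrite -(card_fiber x) -sum1_card; apply: eq_bigl => y; rewrite !inE.
by have [-> | _] := eqVneq (phi y) (phi x); rewrite ?Px ?andbF.
Qed.

Lemma card_morph : #|V| = (#|codom phi| * #|[set x | phi x == 0%R]|)%N.
Proof.
have := card_preim_morph predT; rewrite cardsT => ->; congr (_ * _)%N.
by apply: eq_card => w; rewrite inE andbT.
Qed.

Lemma ratio_preim_morph (R : numFieldType) (P : pred W) :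
  #|[set x | P (phi x)]|%:R / #|V|%:R =
  #|[set w in codom phi | P w]|%:R / #|codom phi|%:R :> R.
Proof.
have ker_gt0 : (0 < #|[set x | phi x == 0%R]|)%N.
  by apply/card_gt0P; exists 0; rewrite inE morph0.
rewrite card_preim_morph card_morph !natrM invfM mulrACA divff ?mulr1 //.
by rewrite pnatr_eq0 -lt0n.
Qed.

Lemma card_ker_morph : (forall w, exists x, phi x = w) ->
  (#|[set x | phi x == 0%R]| * #|W|)%N = #|V|.
Proof.
move=> phi_surj; rewrite card_morph mulnC; congr (_ * _)%N.
apply: eq_card => w; have [x <-] := phi_surj w.
by rewrite codom_f.
Qed.
End MorphismFibers.

(** * Orthogonality in F^n *)

Section DotProduct.
Variables (F : fieldType) (n : nat).
Implicit Types u v g l P Q : 'rV[F]_n.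

Definition dotp u v : F := (u *m v^T) 0 0.

Lemma dotpE u v : dotp u v = \sum_i u 0 i * v 0 i.
Proof. by rewrite /dotp mxE; apply: eq_bigr => i _; rewrite mxE. Qed.

Lemma dotpC u v : dotp u v = dotp v u.
Proof. by rewrite !dotpE; apply: eq_bigr => i _; rewrite mulrC. Qed.

Lemma dotpDl u v w : dotp (u + v) w = dotp u w + dotp v w.
Proof. by rewrite /dotp mulmxDl mxE. Qed.

Lemma dotpZl a u v : dotp (a *: u) v = a * dotp u v.
Proof. by rewrite /dotp -scalemxAl mxE. Qed.

Lemma dotpZr a u v : dotp u (a *: v) = a * dotp u v.
Proof. by rewrite dotpC dotpZl dotpC. Qed.

Lemma dotpBl u v w : dotp (u - v) w = dotp u w - dotp v w.
Proof. by rewrite dotpDl -scaleN1r dotpZl mulN1r. Qed.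

Lemma dotp_delta i v : dotp (delta_mx 0 i) v = v 0 i.
Proof.
rewrite dotpE (bigD1 i) //= big1 => [|j /negbTE ji]; last by rewrite mxE ji mul0r.
by rewrite mxE !eqxx mul1r addr0.
Qed.

Lemma dotp0l v : dotp 0 v = 0.
Proof. by rewrite /dotp mul0mx mxE. Qed.

Lemma dotp_eq0 u v : (dotp u v == 0) = (u *m v^T == 0).
Proof.
apply/eqP/eqP => [uv0|uv0]; last by rewrite /dotp uv0 mxE.
by apply/matrixP => i j; rewrite !ord1 [RHS]mxE; exact: uv0.
Qed.

Lemma sub_rV_orthoP g l :
  reflect (forall P, dotp l P = 0 -> dotp g P = 0) (g <= l)%MS.
Proof.
apply: (iffP idP) => [/sub_rVP[c ->] P lP|gl]; first by rewrite dotpZl lP mulr0.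
rewrite submxE; apply/eqP/rowP => j; set C := cokermx l.
have dotp_col u : dotp u (col j C)^T = (u *m C) 0 j.
  by rewrite dotpE mxE; apply: eq_bigr => k _; rewrite !mxE.
by rewrite -dotp_col (gl _) ?mxE // dotp_col mulmx_coker mxE.
Qed.

Lemma exists_ortho_notin l Q : (2 < n)%N -> l != 0 ->
  exists2 P, dotp l P = 0 & ~~ (P <= Q)%MS.
Proof.
move=> n_gt2 l0; pose K := kermx l^T.
have [sKQ | /row_subPn[i KiQ]] := boolP (K <= Q)%MS; last first.
  exists (row i K) => //; apply/eqP.
  by rewrite dotpC dotp_eq0 -row_mul mulmx_ker row0.
have := mxrankS sKQ; rewrite mxrank_ker mxrank_tr rank_rV l0.
by move/leq_trans/(_ (rank_leq_row Q)); lia.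
Qed.

End DotProduct.

Lemma scalerIv (F : fieldType) n (l : 'rV[F]_n) :
  l != 0 -> injective (fun c : F => c *: l).
Proof.
move=> l0 c c' /eqP; rewrite -subr_eq0 -scalerBl scaler_eq0 (negbTE l0) orbF subr_eq0.
by move/eqP.
Qed.

(** * The jet of a form at a point *)

Lemma coordE (F : fieldType) (v : 'rV[F]_3) (i : 'I_3) : coord v i = v 0 i.
Proof. by rewrite /coord inord_val. Qed.

Lemma on_lineE (F : fieldType) (l P : 'rV[F]_3) : on_line l P = (dotp l P == 0).
Proof. by rewrite /on_line dotpE; under eq_bigr do rewrite !coordE. Qed.

Lemma dvdX2 (F : fieldType) (p : {poly F}) :
  ('X^2 %| p) = (p`_0 == 0) && (p`_1 == 0).
Proof.
rewrite /dvdp -Pdiv.IdomainMonic.take_poly_modp.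
apply/eqP/andP => [p2 | [/eqP p0 /eqP p1]].
  have coef_p i : (take_poly 2 p)`_i = 0 by rewrite p2 coef0.
  by split; apply/eqP; [move: (coef_p 0%N) | move: (coef_p 1%N)];
    rewrite coef_take_poly.
by apply/polyP => -[|[|i]]; rewrite coef_take_poly coef0.
Qed.

Section Forms.
Variables (F : finFieldType) (d : nat).
Implicit Types (f : homog F d) (t : mon d) (Q P l : 'rV[F]_3).

Lemma mexp_sum t : (\sum_(k < 3) mexp k t)%N = d.
Proof. by rewrite !big_ord_recr big_ord0 /mexp /=; case: t => -[a b] /= ab; lia. Qed.

Definition grad f Q : 'rV[F]_3 := \row_(i < 3) pderh f i Q.

Lemma dotp_grad f Q P : dotp (grad f Q) P = \sum_(i < 3) pderh f i Q * coord P i.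
Proof. by rewrite dotpE; apply: eq_bigr => i _; rewrite mxE coordE. Qed.

Lemma coef0_restr f Q P : (restr f Q P)`_0 = valh f Q.
Proof.
rewrite -horner_coef0 /restr /valh /evalh horner_sum; apply: eq_bigr => t _.
rewrite hornerM hornerC horner_prod; congr (_ * _); apply: eq_bigr => k _.
by rewrite horner_exp !hornerE.
Qed.

Lemma coef1_restr f Q P : (restr f Q P)`_1 = dotp (grad f Q) P.
Proof.
rewrite dotp_grad /pderh; under eq_bigr do rewrite mulr_suml.
rewrite exchange_big -[_`_1]mulr1n -coef_deriv -horner_coef0 /restr /evalh.
rewrite raddf_sum horner_sum; apply: eq_bigr => t _ /=.
rewrite deriv_mulC !big_ord_recr !big_ord0 /= !subn0 !subn1 !mul1r.
rewrite !(derivM, deriv_exp, derivD, derivC, derivX) !(hornerMn, hornerE) /=.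
ring.
Qed.

Lemma restr_diag f Q : restr f Q Q = (1 + 'X) ^+ d * (valh f Q)%:P.
Proof.
rewrite /restr /valh /evalh rmorph_sum mulr_sumr; apply: eq_bigr => t _ /=.
rewrite rmorphM rmorph_prod /= mulrCA; congr (_ * _).
have scale_1X (c : F) : c%:P + c%:P * 'X = (1 + 'X) * c%:P.
  by rewrite mulrDl mul1r mulrC.
under eq_bigr do rewrite scale_1X exprMn -rmorphXn.
by rewrite big_split /= prodrXr mexp_sum.
Qed.

(* Euler's identity is the X-coefficient of f((1 + X) Q) = (1 + X)^d f(Q). *)
Lemma euler f Q : dotp (grad f Q) Q = d%:R * valh f Q.
Proof.
rewrite -coef1_restr restr_diag coefMC; congr (_ * _).
rewrite -[_`_1]mulr1n -coef_deriv -horner_coef0 deriv_exp.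
by rewrite !(derivD, derivC, derivX) !(hornerMn, hornerE) expr1n.
Qed.

Lemma tangentbE f Q l : l != 0 ->
  tangentb f Q l = (valh f Q == 0) && (grad f Q <= l)%MS.
Proof.
move=> l0; have restr_X2 P :
    ('X^2 %| restr f Q P) = (valh f Q == 0) && (dotp (grad f Q) P == 0).
  by rewrite dvdX2 coef0_restr coef1_restr.
apply/forallP/andP => [tgt | [/eqP fQ0 /sub_rV_orthoP gl] P]; last first.
  rewrite on_lineE restr_X2 fQ0 eqxx.
  by apply/implyP => /eqP/gl ->; rewrite eqxx implybT.
have tgtP P : dotp l P = 0 -> ~~ (P <= Q)%MS ->
    (valh f Q == 0) && (dotp (grad f Q) P == 0).
  by move=> lP PQ; have := tgt P; rewrite on_lineE lP eqxx PQ restr_X2.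
have [P0 lP0 P0Q] := exists_ortho_notin Q (isT : (2 < 3)%N) l0.
have /andP[/eqP fQ0 _] := tgtP P0 lP0 P0Q.
split; first by rewrite fQ0.
apply/sub_rV_orthoP => P lP; have [/sub_rVP[c ->] | PQ] := boolP (P <= Q)%MS.
  by rewrite dotpZr euler fQ0 !mulr0.
by have /andP[_ /eqP] := tgtP P lP PQ.
Qed.
End Forms.

Lemma prod_expr_delta (R : comPzSemiRingType) n (x : 'I_n -> R) c (s : 'I_n) :
  \prod_k x k ^+ (c * (k == s)) = x s ^+ c.
Proof.
rewrite (bigD1 s) //= eqxx muln1 big1 ?mulr1 // => k /negbTE ks.
by rewrite ks muln0 expr0.
Qed.

Lemma prod_expr_delta1 (R : comPzSemiRingType) n (x : 'I_n -> R) (s : 'I_n) :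
  \prod_k x k ^+ (k == s) = x s.
Proof.
by rewrite -[RHS]expr1 -(prod_expr_delta x 1); apply: eq_bigr => k _; rewrite mul1n.
Qed.

Section Monomials.
Variables (F : finFieldType) (d : nat).
Implicit Types (t : mon d) (Q : 'rV[F]_3).

Definition mon_of (e : nat -> nat) : mon d :=
  insubd (exist _ (ord0, ord0) (leq0n d) : mon d) (inord (e 0%N), inord (e 1%N)).

Lemma mexp_mon_of e k : (e 0 + e 1 + e 2)%N = d -> (k < 3)%N ->
  mexp k (mon_of e) = e k.
Proof.
move=> e_sum k_lt3.
have e_val : val (mon_of e) = (inord (e 0%N), inord (e 1%N)).
  by rewrite insubdK // unfold_in /= !inordK; lia.
by rewrite /mexp e_val /= !inordK; [case: k k_lt3 => [|[|[|]]] //= _; lia | lia..].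
Qed.

Definition mon_lin (s j : 'I_3) : mon d :=
  mon_of (fun i => d.-1 * (i == s) + (i == j))%N.

Lemma mexp_mon_lin s j (k : 'I_3) : (0 < d)%N ->
  mexp k (mon_lin s j) = (d.-1 * (k == s) + (k == j))%N.
Proof.
move=> d_gt0; rewrite mexp_mon_of //.
by case: s j => [[|[|[|]]] ?] // [[|[|[|]]] ?] //=; lia.
Qed.

Definition mon_comb (a : 'I_3 -> F) (m : 'I_3 -> mon d) : homog F d :=
  [ffun t => \sum_j a j * (t == m j)%:R].

Lemma sum_mon_comb (w : mon d -> F) a m :
  \sum_t mon_comb a m t * w t = \sum_j a j * w (m j).
Proof.
under eq_bigr do rewrite ffunE mulr_suml; rewrite exchange_big; apply: eq_bigr => j _.
rewrite (bigD1 (m j)) //= eqxx mulr1 big1 ?addr0 // => t /negbTE ->.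
by rewrite mulr0 mul0r.
Qed.

Lemma valh_mon_comb_lin Q a s : (0 < d)%N ->
  valh (mon_comb a (mon_lin s)) Q = Q 0 s ^+ d.-1 * \sum_j a j * Q 0 j.
Proof.
move=> d_gt0; rewrite /valh /evalh sum_mon_comb mulr_sumr; apply: eq_bigr => j _.
under eq_bigr do rewrite mexp_mon_lin // exprD coordE.
by rewrite big_split /= prod_expr_delta prod_expr_delta1 mulrCA.
Qed.

Lemma pderh_mon_comb_lin Q a s (i : 'I_3) : (0 < d)%N -> i != s ->
  pderh (mon_comb a (mon_lin s)) i Q = a i * Q 0 s ^+ d.-1.
Proof.
move=> d_gt0 i_neq_s; rewrite /pderh; under eq_bigr do rewrite -mulrA.
rewrite sum_mon_comb (bigD1 i) //= [X in _ + X]big1 ?addr0 => [|j ji].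
  rewrite mexp_mon_lin // (negbTE i_neq_s) eqxx /= muln0 mul1r.
  under eq_bigr do rewrite mexp_mon_lin // addnK coordE.
  by rewrite prod_expr_delta.
by rewrite mexp_mon_lin // (negbTE i_neq_s) eq_sym (negbTE ji) /= muln0 mul0r mulr0.
Qed.
End Monomials.

Section Jet.
Variables (F : finFieldType) (d : nat) (Q : 'rV[F]_3).
Implicit Types f : homog F d.

Definition jet f : F * 'rV[F]_3 := (valh f Q, grad f Q).

Definition jet_space : {set F * 'rV[F]_3} := [set w | dotp w.2 Q == d%:R * w.1].

Lemma jetD : {morph jet : f g / f + g}.
Proof.
move=> f g; congr pair; rewrite /valh /evalh /grad.
  by rewrite -big_split; apply: eq_bigr => t _; rewrite ffunE mulrDl.
apply/rowP => i; rewrite !mxE /pderh -big_split; apply: eq_bigr => t _.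
by rewrite ffunE !mulrDl.
Qed.

Lemma singularbE f : singularb f Q = (jet f == 0).
Proof.
rewrite /singularb /jet xpair_eqE; congr (_ && _); apply/forallP/eqP => [pd0|g0 i].
  by apply/rowP => i; rewrite !mxE; apply/eqP.
by have := congr1 (fun g : 'rV[F]_3 => g 0 i) g0; rewrite !mxE => ->.
Qed.

Lemma jet_in_space f : jet f \in jet_space.
Proof. by rewrite inE euler. Qed.

Lemma eq_in_jet_space (s : 'I_3) w w' : Q 0 s != 0 ->
  w \in jet_space -> w' \in jet_space -> w.1 = w'.1 ->
  (forall i, i != s -> w.2 0 i = w'.2 0 i) -> w = w'.
Proof.
case: w w' => [v g] [v' g'] Qs0; rewrite !inE /= => /eqP Hg /eqP Hg' vv' gg'.
have : dotp (g - g') Q = (g - g') 0 s * Q 0 s.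
  rewrite dotpE (bigD1 s) //= big1 ?addr0 // => i /gg'.
  by rewrite !mxE => ->; rewrite subrr mul0r.
rewrite dotpBl Hg Hg' vv' subrr => /esym/eqP; rewrite mulf_eq0 (negbTE Qs0) orbF.
rewrite !mxE subr_eq0 => /eqP gs; congr pair => //; apply/rowP => i.
by have [-> | /gg'] := eqVneq i s.
Qed.

Lemma jet_surj w : (0 < d)%N -> Q != 0 -> w \in jet_space -> exists f, jet f = w.
Proof.
move=> d_gt0 /rV0Pn[s Qs0] Hw; have c0 : Q 0 s ^+ d.-1 != 0 by rewrite expf_neq0.
(* f = x_s^(d-1) (a.x), the s-coefficient of a being tuned so that f(Q) = w.1 *)
pose a := (Q 0 s ^+ d.-1)^-1 *: (w.2 + ((w.1 - dotp w.2 Q) / Q 0 s) *: delta_mx 0 s).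
exists (mon_comb (fun j => a 0 j) (mon_lin d s)).
apply: (eq_in_jet_space Qs0 (jet_in_space _) Hw) => [|i i_neq_s] /=.
  rewrite valh_mon_comb_lin // -dotpE /a dotpZl mulVKf // dotpDl dotpZl dotp_delta.
  by rewrite divfK // addrC subrK.
rewrite /grad mxE pderh_mon_comb_lin // /a !mxE (negbTE i_neq_s) andbF mulr0 addr0.
by rewrite mulrAC mulVf ?mul1r.
Qed.

Lemma codom_jet : (0 < d)%N -> Q != 0 -> codom jet =i jet_space.
Proof.
move=> d_gt0 Q0 w; apply/codomP/idP => [[f ->] | /jet_surj[] // f <-].
  exact: jet_in_space.
by exists f.
Qed.
End Jet.

Section JetCounting.
Variables (F : finFieldType) (Q : 'rV[F]_3).
Hypothesis Q0 : Q != 0.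

Lemma dotp_surj c : exists g, dotp g Q = c.
Proof.
have /rV0Pn[s Qs0] := Q0; exists ((c / Q 0 s) *: delta_mx 0 s).
by rewrite dotpZl dotp_delta divfK.
Qed.

Lemma card_ortho : #|[set g : 'rV[F]_3 | dotp g Q == 0]| = (#|F| ^ 2)%N.
Proof.
have := card_ker_morph (fun u v => dotpDl u v Q) dotp_surj; rewrite card_mx => ker_card.
by apply/eqP; rewrite -(eqn_pmul2r (ltnW (card_finNzRing_gt1 F))) ker_card -expnSr.
Qed.

Lemma card_jet_space d : #|jet_space d Q| = (#|F| ^ 3)%N.
Proof.
pose phi (w : F * 'rV[F]_3) := dotp w.2 Q - d%:R * w.1.
have phiD : {morph phi : w w' / w + w'}.
  by move=> [v g] [v' g']; rewrite /phi /= dotpDl mulrDr opprD addrACA.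
have phi_surj c : exists w, phi w = c.
  by have [g gQ] := dotp_surj c; exists (0, g); rewrite /phi /= gQ mulr0 subr0.
have := card_ker_morph phiD phi_surj; rewrite card_prod card_mx mul1n => ker_card.
have -> : jet_space d Q = [set w | phi w == 0].
  by apply/setP => w; rewrite !inE subr_eq0.
by apply/eqP; rewrite -(eqn_pmul2r (ltnW (card_finNzRing_gt1 F))) ker_card mulnC.
Qed.
End JetCounting.

Section JetSets.
Variables (F : finFieldType) (d : nat) (Q : 'rV[F]_3).
Hypothesis Q0 : Q != 0.

Lemma card_tangent_jets l : l != 0 -> dotp l Q = 0 ->
  #|[set w in jet_space d Q | (w.1 == 0) && (w.2 <= l)%MS]| = #|F|.
Proof.
move=> l0 lQ; have inj : injective (fun c => (0 : F, c *: l)).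
  by move=> c c' [] /(scalerIv l0).
rewrite -[RHS]cardsT -(card_imset _ inj); congr #|pred_of_set _|.
apply/setP => -[v g]; rewrite !inE /=.
apply/idP/imsetP => [/and3P[_ /eqP -> /sub_rVP[c ->]] | [c _ [-> ->]]].
  by exists c.
by rewrite dotpZl lQ !mulr0 eqxx scalemx_sub.
Qed.

Lemma card_nonsingular_tangent_jets l : l != 0 -> dotp l Q = 0 ->
  #|[set w in jet_space d Q | [&& w.1 == 0, (w.2 <= l)%MS & w != 0]]| = #|F|.-1.
Proof.
move=> l0 lQ; rewrite -(card_tangent_jets l0 lQ) [in RHS](cardsD1 0) !inE /=.
rewrite dotp0l mulr0 eqxx sub0mx /=; apply: eq_card => w.
by rewrite !inE; case: (w == 0); rewrite /= ?andbF ?andbT.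
Qed.

Lemma card_jets_val0 : #|[set w in jet_space d Q | w.1 == 0]| = (#|F| ^ 2)%N.
Proof.
have inj : injective (fun g : 'rV[F]_3 => (0 : F, g)) by move=> g g' [].
rewrite -(card_ortho Q0) -(card_imset _ inj); congr #|pred_of_set _|.
apply/setP => -[v g]; rewrite !inE /=.
apply/idP/imsetP => [/andP[/eqP Hg v0] | [g' Hg' [-> ->]]].
  by exists g; rewrite ?inE ?Hg (eqP v0) ?mulr0.
by move: Hg'; rewrite inE mulr0 eqxx andbT.
Qed.
End JetSets.

(** * Lines through Q *)

Section Lines.
Variables (F : finFieldType) (Q : 'rV[F]_3) (Ls : seq 'rV[F]_3).
Hypotheses (Q0 : Q != 0) (LsQ : lines_through Q Ls).

Lemma lines_through_mem l : l \in Ls -> l != 0 /\ dotp l Q = 0.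
Proof. by case: LsQ => Ls_lines _ /Ls_lines[l0]; rewrite on_lineE => /eqP. Qed.

Lemma card_line_points l : l \in Ls ->
  #|[set g : 'rV[F]_3 | [&& g != 0, dotp g Q == 0 & (g == l)%MS]]| = #|F|.-1.
Proof.
move=> /lines_through_mem[l0 lQ].
rewrite -(cardsC1 (0 : F)) -(card_imset _ (scalerIv l0)); apply: eq_card => g.
rewrite !inE; apply/and3P/imsetP => [[g0 _ /andP[/sub_rVP[c gl] _]] | [c c0 ->]].
  by exists c; rewrite // !inE; apply: contraNneq g0 => c0; rewrite gl c0 scale0r.
move: c0; rewrite !inE => c0.
by rewrite scaler_eq0 negb_or c0 l0 dotpZl lQ mulr0; split=> //; apply/eqmxP/eqmx_scale.
Qed.

Lemma size_lines_through : size Ls = #|F|.+1.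
Proof.
(* Every nonzero g with g.Q = 0 is a multiple of exactly one l in Ls, and every
   l has q - 1 nonzero multiples: count the pairs (g, l). *)
pose K0 := [set g : 'rV[F]_3 | (g != 0) && (dotp g Q == 0)].
have card_K0 : #|K0| = (#|F| ^ 2).-1.
  rewrite -(card_ortho Q0) [in RHS](cardsD1 0) inE dotp0l eqxx.
  by apply: eq_card => g; rewrite !inE.
have count1 g : g \in K0 -> count (fun l => (g == l)%MS) Ls = 1%N.
  by rewrite inE => /andP[g0 gQ]; case: LsQ => _; apply; rewrite // on_lineE.
have : (\sum_(g in K0) count (fun l => (g == l)%MS) Ls)%N = #|K0|.
  by rewrite -sum1_card; apply: eq_bigr => g /count1.
under eq_bigr do rewrite -sum1_count big_mkcond /=.
rewrite exchange_big /= (eq_big_seq (fun=> #|F|.-1)) => [|l lLs]; last first.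
  rewrite -(card_line_points lLs) -sum1_card -big_mkcondr /=.
  by apply: eq_bigl => g; rewrite !inE -andbA.
rewrite big_const_seq count_predT iter_addn_0 card_K0.
have := card_finNzRing_gt1 F; move: #|F| (size Ls) => q n q_gt1; nia.
Qed.

Lemma A0bE d (f : homog F d) : A0b Q Ls f = (valh f Q != 0).
Proof.
apply/allP/idP => [notT | fQ l /lines_through_mem[l0 _]]; last first.
  by rewrite tangentbE // negb_and fQ.
apply/negP => /eqP fQ0.
suff [l lLs gl] : exists2 l, l \in Ls & (grad f Q <= l)%MS.
  have [l0 _] := lines_through_mem lLs.
  by move: (notT l lLs); rewrite tangentbE // fQ0 eqxx gl.
have [g0 | g0] := eqVneq (grad f Q) 0.
  by exists Ls`_0; rewrite ?g0 ?sub0mx // mem_nth // size_lines_through.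
have gQ : on_line (grad f Q) Q by rewrite on_lineE euler fQ0 mulr0.
have /hasP[l lLs /andP[gl _]] : has (fun l => (grad f Q == l)%MS) Ls.
  by case: LsQ => _ count1; rewrite has_count count1.
by exists l.
Qed.
End Lines.

(** * Densities *)

Section Measures.
Variables (R : realType) (F : finFieldType) (d : nat) (Q : 'rV[F]_3).
Hypotheses (d_gt0 : (0 < d)%N) (Q0 : Q != 0).
Local Notation q := (#|F|%:R : R).
Implicit Types A : pred (homog F d).

Lemma q_neq0 : q != 0.
Proof. by rewrite pnatr_eq0 -lt0n (ltnW (card_finNzRing_gt1 F)). Qed.

Lemma eq_mud A B : A =1 B -> mud R A = mud R B.
Proof.
by move=> AB; rewrite /mud; congr (_%:R / _); apply: eq_card => f; rewrite !inE AB.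
Qed.

Lemma mudC A : mud R (fun f => ~~ A f) = 1 - mud R A.
Proof.
have V0 : (#|{: homog F d}|%:R : R) != 0.
  by rewrite pnatr_eq0 -lt0n; apply/card_gt0P; exists 0.
rewrite /mud -[X in X - _](divff V0) -mulrBl -natrB ?max_card //; congr (_%:R / _).
by rewrite -(cardsC [set f | A f]) addKn; apply: eq_card => f; rewrite !inE.
Qed.

Lemma mud_jet (P : pred (F * 'rV[F]_3)) :
  mud R (fun f : homog F d => P (jet Q f)) =
  #|[set w in jet_space d Q | P w]|%:R / q ^+ 3.
Proof.
rewrite /mud (ratio_preim_morph (jetD Q)) -natrX -(card_jet_space Q0 d).
rewrite (eq_card (codom_jet d_gt0 Q0)); congr (_%:R / _).
by apply: eq_card => w; rewrite !inE (codom_jet d_gt0 Q0) inE.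
Qed.

Lemma mud_tangent l : l != 0 -> dotp l Q = 0 ->
  mud R (fun f : homog F d => tangentb f Q l) = q ^- 2.
Proof.
move=> l0 lQ; rewrite (eq_mud (fun f => tangentbE f Q l0)).
rewrite (mud_jet (fun w => (w.1 == 0) && (w.2 <= l)%MS)) card_tangent_jets //.
by have q0 := q_neq0; field.
Qed.

Lemma mud_not_tangent l : l != 0 -> dotp l Q = 0 ->
  mud R (fun f : homog F d => ~~ tangentb f Q l) = 1 - q ^- 2.
Proof. by move=> l0 lQ; rewrite mudC mud_tangent. Qed.

Lemma mud_ALb l : l != 0 -> dotp l Q = 0 -> mud R (@ALb F d Q l) = q ^- 2 * (1 - q^-1).
Proof.
move=> l0 lQ; pose P (w : F * 'rV[F]_3) := [&& w.1 == 0, (w.2 <= l)%MS & w != 0].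
rewrite (@eq_mud _ (fun f => P (jet Q f))) => [|f]; last first.
  by rewrite /ALb tangentbE // singularbE -andbA.
rewrite mud_jet card_nonsingular_tangent_jets // -subn1 natrB; last first.
  exact: ltnW (card_finNzRing_gt1 F).
by have q0 := q_neq0; field.
Qed.

Lemma mud_A0b Ls : lines_through Q Ls -> mud R (@A0b F d Q Ls) = 1 - q^-1.
Proof.
move=> LsQ; rewrite (eq_mud (A0bE Q0 LsQ (d:=d))) mudC.
rewrite (mud_jet (fun w => w.1 == 0)) card_jets_val0 // natrX.
by have q0 := q_neq0; congr (_ - _); field.
Qed.
End Measures.

Lemma bernoulli_le (R : realDomainType) (x : R) n :
  x <= 1 -> 1 - x *+ n <= (1 - x) ^+ n.
Proof.
move=> x_le1; elim: n => [|n IH]; first by rewrite mulr0n subr0 expr0.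
rewrite exprSr; apply: le_trans (ler_wpM2r _ IH); last by rewrite subr_ge0.
have : 0 <= x * x *+ n by rewrite mulrn_wge0 // sqr_ge0.
rewrite mulrSr -mulrnAl; nra.
Qed.

Section TangencyBounds.
Variables (R : realFieldType) (m : nat).
Hypothesis m_gt1 : (1 < m)%N.
Local Notation q := (m%:R : R).

Lemma one_sub_inv_le : 1 - q^-1 <= (1 - q ^- 2) ^+ m.
Proof.
have q_gt1 : 1 < q by rewrite ltr1n.
have q_gt0 : 0 < q := lt_trans ltr01 q_gt1.
apply: le_trans (bernoulli_le _ _); last first.
  by rewrite invf_le1 ?exprn_ege1 ?exprn_gt0 // ltW.
have q0 : q != 0 by rewrite gt_eqF.
by have -> : q ^- 2 *+ m = q^-1 by rewrite -mulr_natr; field.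
Qed.

Lemma A0_bound n : n = m.+1 ->
  1 - q^-1 <= (1 - q ^- 2)^-1 * \prod_(i < n) (1 - q ^- 2).
Proof.
move=> ->; rewrite prodr_const card_ord [_ ^+ m.+1]exprS mulKf ?one_sub_inv_le //.
by rewrite subr_eq0 eq_sym invr_eq1 -natrX pnatr_eq1; apply/eqP; nia.
Qed.

Lemma AL_bound n (j : 'I_n) : n = m.+1 ->
  q ^- 2 * (1 - q^-1) <= q ^- 2 * \prod_(i < n | i != j) (1 - q ^- 2).
Proof.
move=> n_eq; rewrite (prodr_const (predC1 j)) cardC1 card_ord n_eq.
by rewrite ler_wpM2l ?invr_ge0 ?exprn_ge0 ?one_sub_inv_le.
Qed.
End TangencyBounds.

Local Open Scope classical_set_scope.
Local Open Scope ring_scope.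

Lemma lim_eventually_cst (R : realType) (u : nat -> R) c l :
  (forall n, (0 < n)%N -> u n = c) -> u @ \oo --> l -> l = c.
Proof.
move=> u_cst u_l; have u_c : u @ \oo --> c.
  by apply: cvg_near_cst; exists 1%N => // n /= /u_cst.
exact: cvg_unique u_l u_c.
Qed.

Theorem lemma4p6 (R : realType) (F : finFieldType) (Q : 'rV[F]_3)
  (Ls : seq 'rV[F]_3) :
  Q != 0 -> lines_through Q Ls ->
  (exists d0 : nat, forall d : nat, (d0 <= d)%N ->
     mud R (@A0b F d Q Ls) <=
       (1 - (#|F|%:R : R) ^- 2)^-1 *
       \prod_(i < size Ls) mud R (fun f : homog F d => ~~ tangentb f Q (Ls`_i))
     /\ forall j : 'I_(size Ls),
       mud R (@ALb F d Q (Ls`_j)) <=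
         mud R (fun f : homog F d => tangentb f Q (Ls`_j)) *
         \prod_(i < size Ls | i != j)
            mud R (fun f : homog F d => ~~ tangentb f Q (Ls`_i)))
  /\
  (forall (lA0 : R) (lN lT lA : nat -> R),
     (fun d => mud R (@A0b F d Q Ls)) @ \oo --> lA0 ->
     (forall i, (i < size Ls)%N ->
        (fun d => mud R (fun f : homog F d => ~~ tangentb f Q (Ls`_i))) @ \oo --> lN i) ->
     (forall i, (i < size Ls)%N ->
        (fun d => mud R (fun f : homog F d => tangentb f Q (Ls`_i))) @ \oo --> lT i) ->
     (forall i, (i < size Ls)%N ->
        (fun d => mud R (@ALb F d Q (Ls`_i))) @ \oo --> lA i) ->
     lA0 <= (1 - (#|F|%:R : R) ^- 2)^-1 * \prod_(i < size Ls) lN i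
     /\ forall j : 'I_(size Ls),
          lA j <= lT j * \prod_(i < size Ls | i != j) lN i).
Proof.
move=> Q0 LsQ; have n_eq := size_lines_through Q0 LsQ.
have F_gt1 := card_finNzRing_gt1 F.
have Ls_i (i : 'I_(size Ls)) : Ls`_i != 0 /\ dotp Ls`_i Q = 0.
  exact/(lines_through_mem LsQ)/mem_nth.
have mudN d (i : 'I_(size Ls)) : (0 < d)%N ->
    mud R (fun f : homog F d => ~~ tangentb f Q Ls`_i) = 1 - (#|F|%:R : R) ^- 2.
  by move=> d_gt0; have [l0 lQ] := Ls_i i; exact: mud_not_tangent.
split.
  exists 1%N => d d_gt0; rewrite (eq_bigr _ (fun i _ => mudN d i d_gt0)).
  split=> [|j]; first by rewrite mud_A0b //; exact: A0_bound _ _ n_eq.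
  have [l0 lQ] := Ls_i j; rewrite (eq_bigr _ (fun i _ => mudN d i d_gt0)).
  by rewrite mud_ALb // mud_tangent //; exact: AL_bound _ _ _ n_eq.
move=> lA0 lN lT lA A0_lim N_lim T_lim A_lim.
have lN_eq (i : 'I_(size Ls)) : lN i = 1 - (#|F|%:R : R) ^- 2.
  by apply: lim_eventually_cst (N_lim i (ltn_ord i)) => d; exact: mudN.
have -> : lA0 = 1 - (#|F|%:R : R)^-1.
  by apply: lim_eventually_cst A0_lim => d d0; exact: mud_A0b.
rewrite (eq_bigr _ (fun i _ => lN_eq i)).
split=> [|j]; first exact: A0_bound _ _ n_eq.
have [l0 lQ] := Ls_i j; rewrite (eq_bigr _ (fun i _ => lN_eq i)).
have -> : lA j = (#|F|%:R : R) ^- 2 * (1 - (#|F|%:R : R)^-1).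
  by apply: lim_eventually_cst (A_lim j (ltn_ord j)) => d d0; exact: mud_ALb.
have -> : lT j = (#|F|%:R : R) ^- 2.
  by apply: lim_eventually_cst (T_lim j (ltn_ord j)) => d d0; exact: mud_tangent.
exact: AL_bound _ _ _ n_eq.
Qed.
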